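(* Let $T:\mathbb{R}^n\to\mathbb{R}^n$ be a continuous monotone operator, let $X\subset\mathbb{R}^n$ be nonempty, closed and convex, and let $X^*$ be the solution set of VI$(T,X)$. Consider the two conditions: (WS1) there exists $\rho>0$ such that for all $x^*\in X^*$ and all $x\in X$: $\langle T(x^* ),x-x^*\rangle\ge\rho\,\mathrm{dist}(x,X^* )$; (WS2) there exists $\rho>0$ such that for all $x^*\in X^*$ and all $z\in\mathbb{T}_X(x^* )\cap\mathbb{N}_{X^*}(x^* )$: $\langle T(x^* ),z\rangle\ge\rho\|z\|$. Then: (i) (WS1) implies (WS2) with the same $\rho$. (ii) If $T$ is constant on $X^*$, then (WS2) implies (WS1) with the same $\rho$.
   Context: VI$(T,X)$: find $x^*\in X$ with $\langle T(x^* ),x-x^*\rangle\ge0$ for all $x\in X$; $X^*$ denotes its solution set. $\mathrm{dist}(x,C)=\inf_{y\in C}\|x-y\|$ (Euclidean norm). For a set $C$ and $x\in C$, the normal cone is $\mathbb{N}_C(x)=\{v:\langle v,y-x\rangle\le0\ \forall y\in C\}$, and the tangent cone is $\mathbb{T}_C(x)=\{d:\exists t_k>0,\ d^k\to d \text{ with } x+t_kd^k\in C\ \forall k\}$. Monotone means $\langle T(y)-T(x),y-x\rangle\ge0$ for all $x,y$. *)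

From Stdlib Require Import Reals ClassicalEpsilon.
From mathcomp Require Import all_boot.
Set Implicit Arguments. Unset Strict Implicit. Unset Printing Implicit Defensive.

Local Open Scope R_scope.

Definition Vec (n : nat) := 'I_n -> R.

Definition vadd {n} (u v : Vec n) : Vec n := fun i => u i + v i.
Definition vsub {n} (u v : Vec n) : Vec n := fun i => u i - v i.
Definition vscale {n} (a : R) (u : Vec n) : Vec n := fun i => a * u i.

Definition ip {n} (u v : Vec n) : R := \big[Rplus/0]_(i < n) (u i * v i).
Definition vnorm {n} (u : Vec n) : R := sqrt (ip u u).

Definition vi_is_inf (S : R -> Prop) (m : R) : Prop :=
  (forall r, S r -> m <= r) /\ (forall b, (forall r, S r -> b <= r) -> b <= m).

(* vi_dist(x, C) = inf_{y in C} ||x - y|| (its value is only meaningful for C nonempty) *)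
Definition vi_dist {n} (x : Vec n) (C : Vec n -> Prop) : R :=
  epsilon (inhabits 0) (vi_is_inf (fun r => exists y, C y /\ r = vnorm (vsub x y))).

Definition vi_continuous_op {n} (T : Vec n -> Vec n) : Prop :=
  forall x eps, 0 < eps -> exists delta, 0 < delta /\
    forall y, vnorm (vsub y x) < delta -> vnorm (vsub (T y) (T x)) < eps.

Definition vi_monotone {n} (T : Vec n -> Vec n) : Prop :=
  forall x y, 0 <= ip (vsub (T y) (T x)) (vsub y x).

Definition vi_closed_set {n} (C : Vec n -> Prop) : Prop :=
  forall x, (forall eps, 0 < eps -> exists y, C y /\ vnorm (vsub x y) < eps) -> C x.

Definition vi_convex_set {n} (C : Vec n -> Prop) : Prop :=
  forall x y t, C x -> C y -> 0 <= t <= 1 ->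
    C (vadd (vscale t x) (vscale (1 - t) y)).

Definition VI_sol {n} (T : Vec n -> Vec n) (X : Vec n -> Prop) (x : Vec n) : Prop :=
  X x /\ forall y, X y -> 0 <= ip (T x) (vsub y x).

Definition vi_normal_cone {n} (C : Vec n -> Prop) (x v : Vec n) : Prop :=
  forall y, C y -> ip v (vsub y x) <= 0.

Definition vi_vconv {n} (s : nat -> Vec n) (l : Vec n) : Prop :=
  forall eps, 0 < eps -> exists N, forall k, (N <= k)%nat -> vnorm (vsub (s k) l) < eps.

Definition vi_tangent_cone {n} (C : Vec n -> Prop) (x d : Vec n) : Prop :=
  exists (t : nat -> R) (dk : nat -> Vec n),
    (forall k, 0 < t k) /\ vi_vconv dk d /\ forall k, C (vadd x (vscale (t k) (dk k))).

Definition WS1 {n} (T : Vec n -> Vec n) (X : Vec n -> Prop) (rho : R) : Prop :=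
  forall xs x, VI_sol T X xs -> X x ->
    rho * vi_dist x (VI_sol T X) <= ip (T xs) (vsub x xs).

Definition WS2 {n} (T : Vec n -> Vec n) (X : Vec n -> Prop) (rho : R) : Prop :=
  forall xs z, VI_sol T X xs -> vi_tangent_cone X xs z -> vi_normal_cone (VI_sol T X) xs z ->
    rho * vnorm z <= ip (T xs) z.

From Stdlib Require Import Reals Lra Psatz ClassicalEpsilon FunctionalExtensionality.
From HB Require Import structures.
From mathcomp Require Import all_boot.
Set Implicit Arguments.
Unset Strict Implicit.
Local Open Scope R_scope.

(* (i) A tangent direction z at x* is the limit of directions d_k with
   x* + t_k d_k in X.  As z is normal to X* at x*, <z, x* + t_k d_k - y> >= t_k <z, d_k>
   for every y in X*, so |z| times the distance from x* + t_k d_k to X* is at least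
   t_k <z, d_k>.  Together with (WS1) this gives rho <z, d_k> <= |z| <T x*, d_k>, and
   (WS2) follows as k -> oo.

   (ii) X* is closed by continuity of T and convex by Minty's lemma, so each x in X has
   a nearest point p in X*.  Then x - p is tangent to X and normal to X* at p, and (WS2)
   at p, with T p = T x* and <T x*, p - x*> >= 0, gives
   rho |x - p| <= <T x*, x - p> <= <T x*, x - x*>, where |x - p| is the distance
   from x to X*. *)

Lemma RplusA : associative Rplus. Proof. by move=> a b c; ring. Qed.
Lemma Rplus0l : left_id 0 Rplus. Proof. by move=> a; ring. Qed.
Lemma RplusC : commutative Rplus. Proof. by move=> a b; ring. Qed.
HB.instance Definition _ := Monoid.isComLaw.Build R 0 Rplus RplusA RplusC Rplus0l.

Section Sums.
Variable n : nat.
Notation sumR F := (\big[Rplus/0]_(i < n) F i).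

Lemma sumR_add (F G : 'I_n -> R) : sumR (fun i => F i + G i) = sumR F + sumR G.
Proof. exact: big_split. Qed.

Lemma sumR_scale (c : R) (F : 'I_n -> R) : sumR (fun i => c * F i) = c * sumR F.
Proof. by apply: (big_rec2 (fun a b => a = c * b)) => [|i a b _ ->]; ring. Qed.

Lemma sumR_le (F G : 'I_n -> R) : (forall i, F i <= G i) -> sumR F <= sumR G.
Proof.
move=> FG; apply: (big_rec2 (fun a b => a <= b)) => [|i a b _ ab]; first lra.
by have := FG i; lra.
Qed.

Lemma sumR_ge0 (F : 'I_n -> R) : (forall i, 0 <= F i) -> 0 <= sumR F.
Proof.
move=> F0; apply: (big_rec (fun a => 0 <= a)) => [|i a _ a0]; first lra.
by have := F0 i; lra.
Qed.

Lemma sumR_ge_term (F : 'I_n -> R) j : (forall i, 0 <= F i) -> F j <= sumR F.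
Proof.
move=> F0; rewrite (bigD1 j) //=.
have : 0 <= \big[Rplus/0]_(i < n | i != j) F i.
  apply: (big_rec (fun a => 0 <= a)) => [|i a _ a0]; first lra.
  by have := F0 i; lra.
by rewrite -{1}(Rplus_0_r (F j)); apply: Rplus_le_compat_l.
Qed.

Lemma sumR_const (c : R) : sumR (fun _ => c) = INR n * c.
Proof.
rewrite big_const_ord; elim: n => [|m IH] /=; first ring.
by rewrite IH; case: m {IH} => [|m] /=; ring.
Qed.

End Sums.

Ltac vec_ring := apply: functional_extensionality => ?; rewrite /vadd /vsub /vscale; ring.

Section Vectors.
Variable n : nat.
Implicit Types u v w : Vec n.

Lemma ip_sym u v : ip u v = ip v u.
Proof. by apply: eq_bigr => i _; ring. Qed.

Lemma ip_addl u v w : ip (vadd u v) w = ip u w + ip v w.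
Proof. by rewrite /ip -sumR_add; apply: eq_bigr => i _; rewrite /vadd; ring. Qed.

Lemma ip_scalel a u w : ip (vscale a u) w = a * ip u w.
Proof. by rewrite /ip -sumR_scale; apply: eq_bigr => i _; rewrite /vscale; ring. Qed.

Lemma ip_subl u v w : ip (vsub u v) w = ip u w - ip v w.
Proof.
have -> : vsub u v = vadd u (vscale (-1) v) by vec_ring.
by rewrite ip_addl ip_scalel; ring.
Qed.

Lemma ip_addr u v w : ip w (vadd u v) = ip w u + ip w v.
Proof. by rewrite ip_sym ip_addl (ip_sym u) (ip_sym v). Qed.

Lemma ip_subr u v w : ip w (vsub u v) = ip w u - ip w v.
Proof. by rewrite ip_sym ip_subl (ip_sym u) (ip_sym v). Qed.

Lemma ip_scaler a u w : ip w (vscale a u) = a * ip w u.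
Proof. by rewrite ip_sym ip_scalel (ip_sym u). Qed.

Lemma ip_ge0 u : 0 <= ip u u.
Proof. by apply: sumR_ge0 => i; nra. Qed.

Lemma vnorm_ge0 u : 0 <= vnorm u.
Proof. exact: sqrt_pos. Qed.

Lemma vnorm_sqr u : vnorm u * vnorm u = ip u u.
Proof. exact: sqrt_sqrt (ip_ge0 u). Qed.

Lemma vnorm_lt_sqr u e : 0 <= e -> (vnorm u < e <-> ip u u < e * e).
Proof.
move=> e0; rewrite -vnorm_sqr; have := vnorm_ge0 u.
by split=> ?; nra.
Qed.

Lemma vnorm_le_sqr u v : vnorm u <= vnorm v -> ip u u <= ip v v.
Proof. by rewrite -!vnorm_sqr; have := vnorm_ge0 u; nra. Qed.

Lemma ip_sqr_le u v : ip u v * ip u v <= ip u u * ip v v.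
Proof.
set A := ip u u; set B := ip u v; set C := ip v v.
have quad t : 0 <= A - 2 * t * B + t * t * C.
  have := ip_ge0 (vsub u (vscale t v)).
  by rewrite !ip_subl !ip_subr !ip_scalel !ip_scaler (ip_sym v u) -/A -/B -/C; lra.
have [C0 | C0] : C = 0 \/ 0 < C by have := ip_ge0 v; rewrite -/C; lra.
- (* with [C = 0] the quadratic is affine in [t], so its slope [B] vanishes *)
  have -> : B = 0.
    apply: NNPP => B0; have := quad ((A + 1) / (2 * B)).
    have -> : 2 * ((A + 1) / (2 * B)) * B = A + 1 by field.
    by rewrite C0; lra.
  by have := ip_ge0 u; rewrite -/A; nra.
- have := quad (B / C); have -> : B / C * (B / C) * C = B / C * B by field; lra.
  move=> h; have : 0 <= C * (A - 2 * (B / C) * B + B / C * B) by nra.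
  have -> : C * (A - 2 * (B / C) * B + B / C * B) = A * C - B * B by field; lra.
  lra.
Qed.

Lemma ip_le_vnorm u v : ip u v <= vnorm u * vnorm v.
Proof.
apply: Rle_trans (Rle_abs _) _.
rewrite -sqrt_Rsqr_abs /vnorm -sqrt_mult_alt; last exact: ip_ge0.
exact/sqrt_le_1_alt/ip_sqr_le.
Qed.

Lemma ip_ge_vnorm u v : - (vnorm u * vnorm v) <= ip u v.
Proof.
have := ip_le_vnorm u (vscale (-1) v); rewrite ip_scaler.
have -> : vnorm (vscale (-1) v) = vnorm v.
  by rewrite /vnorm ip_scalel ip_scaler; congr sqrt; ring.
lra.
Qed.

Lemma vnorm_add_le u v : vnorm (vadd u v) <= vnorm u + vnorm v.
Proof.
have := ip_le_vnorm u v; have := vnorm_ge0 u; have := vnorm_ge0 v.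
have := vnorm_sqr u; have := vnorm_sqr v; have := vnorm_ge0 (vadd u v).
have := vnorm_sqr (vadd u v); rewrite ip_addl !ip_addr (ip_sym v u).
nra.
Qed.

Lemma vnorm_sub_le u v w : vnorm (vsub u w) <= vnorm (vsub u v) + vnorm (vsub v w).
Proof.
have -> : vsub u w = vadd (vsub u v) (vsub v w) by vec_ring.
exact: vnorm_add_le.
Qed.

Lemma vnorm_subC u v : vnorm (vsub u v) = vnorm (vsub v u).
Proof. by rewrite /vnorm; congr sqrt; apply: eq_bigr => i _; rewrite /vsub; ring. Qed.

Lemma vnorm_scale a u : 0 <= a -> vnorm (vscale a u) = a * vnorm u.
Proof.
move=> a0; rewrite /vnorm ip_scalel ip_scaler -Rmult_assoc sqrt_mult_alt.
  by rewrite sqrt_square.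
exact: Rmult_le_pos.
Qed.

Lemma vnorm_subvv u : vnorm (vsub u u) = 0.
Proof.
have -> : vsub u u = vscale 0 u by vec_ring.
by rewrite vnorm_scale ?Rmult_0_l //; lra.
Qed.

Lemma abs_coord_le_vnorm u i : Rabs (u i) <= vnorm u.
Proof.
rewrite -sqrt_Rsqr_abs; apply: sqrt_le_1_alt.
rewrite /Rsqr; apply: sumR_ge_term => j.
exact: Rle_0_sqr.
Qed.

Lemma ip_le_coord_bound u e : (forall i, Rabs (u i) <= e) -> ip u u <= INR n * (e * e).
Proof.
move=> ue; rewrite -sumR_const; apply: sumR_le => i.
have := ue i; have := Rabs_pos (u i); have := Rsqr_abs (u i); rewrite /Rsqr; nra.
Qed.

End Vectors.

Lemma inv_succ_eventually_lt eta : 0 < eta ->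
  exists N, forall k, (N <= k)%nat -> / (INR k + 1) < eta.
Proof.
move=> eta0; have [N [Neta N0]] := archimed_cor1 _ eta0.
exists N => k /leP Nk; apply: Rle_lt_trans Neta.
have := lt_0_INR N N0; have := le_INR N k Nk => *.
apply: Rinv_le_contravar; lra.
Qed.

Section Limits.
Variable n : nat.
Implicit Types (a v : Vec n) (s : nat -> Vec n).

Lemma ip_ge0_limit a v :
  (forall eps, 0 < eps -> exists a' v',
     vnorm (vsub a' a) < eps /\ vnorm (vsub v' v) < eps /\ 0 <= ip a' v') ->
  0 <= ip a v.
Proof.
move=> approx; apply: Rnot_lt_le => neg.
set M := vnorm a + vnorm v + 1.
have M0 : 0 < M by have := vnorm_ge0 a; have := vnorm_ge0 v; rewrite /M; lra.
have eps0 : 0 < Rmin 1 (- ip a v / (2 * M)).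
  by apply: Rmin_pos; [lra | apply: Rdiv_lt_0_compat; lra].
set eps := Rmin 1 _ in eps0.
have [eps1 epsM] : eps <= 1 /\ eps * M <= - ip a v / 2.
  split; first exact: Rmin_l.
  have := Rmin_r 1 (- ip a v / (2 * M)); rewrite -/eps => h.
  have -> : - ip a v / 2 = - ip a v / (2 * M) * M by field; lra.
  by apply: Rmult_le_compat_r; lra.
have [a' [v' [aa' [vv' ipa'v']]]] := approx eps eps0.
have ip_split : ip a' v' = ip a v + ip (vsub a' a) v + ip a (vsub v' v)
                           + ip (vsub a' a) (vsub v' v).
  by rewrite !ip_subl !ip_subr; ring.
have := ip_le_vnorm (vsub a' a) v; have := ip_le_vnorm a (vsub v' v).
have := ip_le_vnorm (vsub a' a) (vsub v' v).
have := vnorm_ge0 (vsub a' a); have := vnorm_ge0 (vsub v' v).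
have := vnorm_ge0 a; have := vnorm_ge0 v; rewrite /M in epsM.
nra.
Qed.

Lemma eventually_all_coords (P : nat -> 'I_n -> Prop) :
  (forall i, exists N, forall k, (N <= k)%nat -> P k i) ->
  exists N, forall k, (N <= k)%nat -> forall i, P k i.
Proof.
move=> ev.
pose N i := proj1_sig (constructive_indefinite_description _ (ev i)).
exists (\max_(i < n) N i) => k Nk i.
apply: (proj2_sig (constructive_indefinite_description _ (ev i))).
exact: leq_trans (leq_bigmax_cond _ _) Nk.
Qed.

Lemma vconv_of_coord_cv s l :
  (forall i, Un_cv (fun k => s k i) (l i)) -> vi_vconv s l.
Proof.
move=> cv eps eps0; have n0 := pos_INR n.
set e := eps / (INR n + 1).
have e0 : 0 < e by apply: Rdiv_lt_0_compat; lra.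
have [N HN] : exists N, forall k, (N <= k)%nat -> forall i, Rabs (s k i - l i) < e.
  apply: eventually_all_coords => i; have [N HN] := cv i e e0.
  by exists N => k /leP; exact: HN.
exists N => k Nk; apply/vnorm_lt_sqr; first lra.
have ne : INR n * e = eps - e by rewrite /e; field; lra.
have := @ip_le_coord_bound n (vsub (s k) l) e (fun i => Rlt_le _ _ (HN k Nk i)).
have : 0 <= INR n * e by nra.
nra.
Qed.

Lemma vi_vconv_of_cauchy s :
  (forall eps, 0 < eps -> exists N, forall k m, (N <= k)%nat -> (N <= m)%nat ->
     vnorm (vsub (s k) (s m)) < eps) ->
  exists l, vi_vconv s l.
Proof.
move=> cauchy.
have coord_cauchy i : Cauchy_crit (fun k => s k i).
  move=> eps eps0; have [N HN] := cauchy eps eps0; exists N => k m Nk Nm.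
  apply: Rle_lt_trans (HN k m (introT leP Nk) (introT leP Nm)).
  exact: abs_coord_le_vnorm (vsub (s k) (s m)) i.
exists (fun i => proj1_sig (R_complete _ (coord_cauchy i))).
by apply: vconv_of_coord_cv => i; exact: proj2_sig (R_complete _ (coord_cauchy i)).
Qed.

Lemma closed_vconv (C : Vec n -> Prop) s l :
  vi_closed_set C -> (forall k, C (s k)) -> vi_vconv s l -> C l.
Proof.
move=> Cc Cs sl; apply: Cc => eps eps0; have [N HN] := sl eps eps0.
by exists (s N); rewrite vnorm_subC; split; [exact: Cs | exact: HN].
Qed.

End Limits.

Section Distance.
Variable n : nat.
Implicit Types (x y z p : Vec n) (C : Vec n -> Prop).

Lemma vi_dist_inf x C : (exists y, C y) ->
  vi_is_inf (fun r => exists y, C y /\ r = vnorm (vsub x y)) (vi_dist x C).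
Proof.
move=> [y0 Cy0]; rewrite /vi_dist; apply: epsilon_spec.
set D := fun r => exists y, C y /\ r = vnorm (vsub x y).
have [m [ub lub]] : {m | is_lub (fun r => D (- r)) m}.
  apply: completeness.
    by exists 0 => r [y [_ ry]]; have := vnorm_ge0 (vsub x y); lra.
  by exists (- vnorm (vsub x y0)), y0; split => //; ring.
exists (- m); split.
  move=> r Dr; suff : - r <= m by lra.
  by apply: ub; rewrite /D Ropp_involutive.
move=> b lb; suff : m <= - b by lra.
by apply: lub => r /lb; lra.
Qed.

Lemma vi_dist_le x C y : C y -> vi_dist x C <= vnorm (vsub x y).
Proof. by move=> Cy; apply: (proj1 (vi_dist_inf x (ex_intro _ y Cy))); exists y. Qed.

Lemma vi_dist_ge x C b : (exists y, C y) ->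
  (forall y, C y -> b <= vnorm (vsub x y)) -> b <= vi_dist x C.
Proof. by move=> ne lb; apply: (proj2 (vi_dist_inf x ne)) => r [y [Cy ->]]; exact: lb. Qed.

Lemma vi_dist_ge0 x C : (exists y, C y) -> 0 <= vi_dist x C.
Proof. by move=> ne; apply: vi_dist_ge => // y _; exact: vnorm_ge0. Qed.

Lemma vi_dist_approx x C eps : (exists y, C y) -> 0 < eps ->
  exists y, C y /\ vnorm (vsub x y) < vi_dist x C + eps.
Proof.
move=> ne eps0; apply: NNPP => none.
suff : vi_dist x C + eps <= vi_dist x C by lra.
by apply: vi_dist_ge => // y Cy; apply: Rnot_lt_le => lt; apply: none; exists y.
Qed.

Lemma normal_cone_ip_le_dist C p z x : C p -> vi_normal_cone C p z ->
  ip z (vsub x p) <= vnorm z * vi_dist x C.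
Proof.
move=> Cp Nz; have := vnorm_ge0 z; case=> [z0 | z0]; last first.
  by have := ip_le_vnorm z (vsub x p); rewrite -z0; lra.
suff : ip z (vsub x p) / vnorm z <= vi_dist x C.
  move=> h; have := Rmult_le_compat_l _ _ _ (Rlt_le _ _ z0) h.
  by have -> : vnorm z * (ip z (vsub x p) / vnorm z) = ip z (vsub x p) by field; lra.
apply: vi_dist_ge; first by exists p.
move=> y Cy; apply/(Rmult_le_reg_l (vnorm z)) => //.
have -> : vnorm z * (ip z (vsub x p) / vnorm z) = ip z (vsub x y) + ip z (vsub y p).
  by rewrite !ip_subr; field; lra.
by have := Nz y Cy; have := ip_le_vnorm z (vsub x y); lra.
Qed.

End Distance.

Section Projection.
Variable n : nat.
Implicit Types (x y z p : Vec n) (C : Vec n -> Prop).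

Lemma parallelogram_dist C x y z : vi_convex_set C -> C y -> C z ->
  ip (vsub y z) (vsub y z) <= 2 * ip (vsub x y) (vsub x y) + 2 * ip (vsub x z) (vsub x z)
                              - 4 * (vi_dist x C * vi_dist x C).
Proof.
move=> Cv Cy Cz.
set m := vadd (vscale (1 / 2) y) (vscale (1 - 1 / 2) z).
have Cm : C m by apply: Cv => //; lra.
have dm : vi_dist x C * vi_dist x C <= ip (vsub x m) (vsub x m).
  have := vi_dist_le x Cm; have := vi_dist_ge0 x (ex_intro _ y Cy).
  by rewrite -vnorm_sqr; nra.
move: dm; have -> : vsub x m = vscale (/ 2) (vadd (vsub x y) (vsub x z)).
  by apply: functional_extensionality => i; rewrite /m /vsub /vadd /vscale; field.
have -> : vsub y z = vsub (vsub x z) (vsub x y) by vec_ring.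
(* [vsub] unfolds to a [vadd], so the differences are generalized before rewriting *)
move: (vsub x y) (vsub x z) => a b.
rewrite ip_subl !ip_subr ip_scalel ip_scaler ip_addl !ip_addr (ip_sym b a); lra.
Qed.

Lemma closed_convex_min_exists C x : (exists y, C y) -> vi_closed_set C -> vi_convex_set C ->
  exists p, C p /\ forall y, C y -> vnorm (vsub x p) <= vnorm (vsub x y).
Proof.
move=> ne Cc Cv; set d := vi_dist x C; have d0 : 0 <= d := vi_dist_ge0 x ne.
have approx k : exists y, C y /\ vnorm (vsub x y) < d + / (INR k + 1).
  by apply: vi_dist_approx => //; apply: Rinv_0_lt_compat; have := pos_INR k; lra.
pose ys k := proj1_sig (constructive_indefinite_description _ (approx k)).
have Cys k : C (ys k) by case: (proj2_sig (constructive_indefinite_description _ (approx k))).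
have ys_near k : vnorm (vsub x (ys k)) < d + / (INR k + 1).
  by case: (proj2_sig (constructive_indefinite_description _ (approx k))).
have ys_sqr k : ip (vsub x (ys k)) (vsub x (ys k)) <= d * d + (2 * d + 1) * / (INR k + 1).
  have k1 : 1 <= INR k + 1 by have := pos_INR k; lra.
  have e1 : / (INR k + 1) <= 1 by rewrite -Rinv_1; apply: Rinv_le_contravar; lra.
  have e0 : 0 < / (INR k + 1) by apply: Rinv_0_lt_compat; lra.
  have := ys_near k; have := vnorm_ge0 (vsub x (ys k)); rewrite -vnorm_sqr; nra.
have [p ysp] : exists p, vi_vconv ys p.
  apply: vi_vconv_of_cauchy => eps eps0.
  set c := eps * eps / (4 * (2 * d + 1)).
  have c0 : 0 < c by apply: Rdiv_lt_0_compat; nra.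
  have ec : 4 * (2 * d + 1) * c = eps * eps by rewrite /c; field; lra.
  have [N HN] := inv_succ_eventually_lt c0.
  exists N => k m Nk Nm; apply/vnorm_lt_sqr; first lra.
  have := parallelogram_dist x Cv (Cys k) (Cys m); have := ys_sqr k; have := ys_sqr m.
  have := HN k Nk; have := HN m Nm; rewrite -/d; nra.
exists p; split; first exact: closed_vconv Cc Cys ysp.
move=> y Cy; apply: Rle_trans (vi_dist_le x Cy); apply: Rle_plus_epsilon => eta eta0.
have eta2 : 0 < eta / 2 by lra.
have [N1 HN1] := inv_succ_eventually_lt eta2.
have [N2 HN2] := ysp _ eta2.
have := vnorm_sub_le x (ys (maxn N1 N2)) p; have := ys_near (maxn N1 N2).
have := HN1 _ (leq_maxl N1 N2); have := HN2 _ (leq_maxr N1 N2); rewrite -/d; lra.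
Qed.

Lemma min_normal_cone C x p : vi_convex_set C -> C p ->
  (forall y, C y -> vnorm (vsub x p) <= vnorm (vsub x y)) -> vi_normal_cone C p (vsub x p).
Proof.
move=> Cv Cp pmin y Cy.
set B := ip (vsub x p) (vsub y p); set D := ip (vsub y p) (vsub y p).
have step t : 0 < t <= 1 -> 2 * B <= t * D.
  move=> t01; have Cyt := Cv y p t Cy Cp (conj (Rlt_le _ _ (proj1 t01)) (proj2 t01)).
  have := vnorm_le_sqr (pmin _ Cyt).
  have -> : vsub x (vadd (vscale t y) (vscale (1 - t) p))
            = vsub (vsub x p) (vscale t (vsub y p)) by vec_ring.
  rewrite /B /D; move: (vsub x p) (vsub y p) => u v.
  rewrite !ip_subl !ip_subr !ip_scalel !ip_scaler (ip_sym v u); nra.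
have D0 : 0 <= D := ip_ge0 _.
apply: Rnot_lt_le => B0.
have t01 : 0 < B / (B + D) <= 1.
  split; first by apply: Rdiv_lt_0_compat; lra.
  by apply: (Rmult_le_reg_r (B + D)); [lra | rewrite /Rdiv Rmult_assoc Rinv_l; lra].
have tBD : B / (B + D) * (B + D) = B by field; lra.
have := step _ t01; nra.
Qed.

End Projection.

Section SolutionSet.
Variables (n : nat) (T : Vec n -> Vec n) (X : Vec n -> Prop).
Hypothesis T_cont : vi_continuous_op T.

Lemma VI_sol_closed : vi_closed_set X -> vi_closed_set (VI_sol T X).
Proof.
move=> Xc x near_x.
have Xx : X x.
  by apply: Xc => eps /near_x [y [[Xy _] xy]]; exists y.
split=> // w Xw; apply: ip_ge0_limit => eps eps0.
have [del [del0 Tdel]] := T_cont x eps0.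
have [y [[Xy soly] xy]] := near_x _ (Rmin_pos _ _ del0 eps0).
have [xy_del xy_eps] : vnorm (vsub y x) < del /\ vnorm (vsub y x) < eps.
  by rewrite vnorm_subC; have := Rmin_l del eps; have := Rmin_r del eps; lra.
exists (T y), (vsub w y); split; first exact: Tdel.
split; last exact: soly.
have -> : vsub (vsub w y) (vsub w x) = vsub x y by vec_ring.
by rewrite vnorm_subC.
Qed.

Lemma VI_sol_of_minty y : vi_convex_set X -> X y ->
  (forall w, X w -> 0 <= ip (T w) (vsub w y)) -> VI_sol T X y.
Proof.
move=> Xv Xy minty; split=> // w Xw; apply: ip_ge0_limit => eps eps0.
have [del [del0 Tdel]] := T_cont y eps0.
set b := vnorm (vsub w y); have b0 : 0 <= b := vnorm_ge0 _.
have s0 : 0 < Rmin 1 (del / (b + 1)) by apply: Rmin_pos; [lra | apply: Rdiv_lt_0_compat; lra].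
set s := Rmin 1 _ in s0; have s1 : s <= 1 := Rmin_l _ _.
set ws := vadd (vscale s w) (vscale (1 - s) y).
have ws_y : vsub ws y = vscale s (vsub w y) by rewrite /ws; vec_ring.
exists (T ws), (vsub w y); split.
  apply: Tdel; rewrite ws_y vnorm_scale -/b; last lra.
  have : s * b <= del / (b + 1) * b by apply: Rmult_le_compat_r => //; exact: Rmin_r.
  have : del / (b + 1) * b < del.
    by apply: (Rmult_lt_reg_r (b + 1)); [lra | field_simplify; nra].
  lra.
split; first by rewrite vnorm_subvv.
have := minty ws (Xv w y s Xw Xy (conj (Rlt_le _ _ s0) s1)).
rewrite ws_y ip_scaler; nra.
Qed.

Hypothesis T_mono : vi_monotone T.

Lemma VI_sol_minty y w : VI_sol T X y -> X w -> 0 <= ip (T w) (vsub w y).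
Proof.
move=> [_ soly] Xw; have := T_mono y w; have := soly w Xw.
by rewrite ip_subl; lra.
Qed.

Lemma VI_sol_convex : vi_convex_set X -> vi_convex_set (VI_sol T X).
Proof.
move=> Xv y1 y2 t sol1 sol2 t01.
have Xy : X (vadd (vscale t y1) (vscale (1 - t) y2)) by apply: Xv => //; [case: sol1 | case: sol2].
apply: VI_sol_of_minty => // w Xw.
have -> : vsub w (vadd (vscale t y1) (vscale (1 - t) y2))
          = vadd (vscale t (vsub w y1)) (vscale (1 - t) (vsub w y2)) by vec_ring.
rewrite ip_addr !ip_scaler.
have := VI_sol_minty sol1 Xw; have := VI_sol_minty sol2 Xw; nra.
Qed.

End SolutionSet.

Section WeakSharpness.
Variables (n : nat) (T : Vec n -> Vec n) (X : Vec n -> Prop) (rho : R).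
Hypothesis rho_ge0 : 0 <= rho.

Lemma WS2_of_WS1 : WS1 T X rho -> WS2 T X rho.
Proof.
move=> ws1 xs z solxs [t [d [t0 [dz Xd]]]] Nz; set c := T xs.
have [z0 | z0] : vnorm z = 0 \/ 0 < vnorm z by have := vnorm_ge0 z; lra.
  by have := ip_ge_vnorm c z; rewrite z0; lra.
have along k : 0 <= ip (vsub (vscale (vnorm z) c) (vscale rho z)) (d k).
  set xk := vadd xs (vscale (t k) (d k)).
  have xk_xs : vsub xk xs = vscale (t k) (d k) by rewrite /xk; vec_ring.
  have := ws1 xs xk solxs (Xd k); have := normal_cone_ip_le_dist xk solxs Nz.
  rewrite ip_subl !ip_scalel xk_xs !ip_scaler -/c; have := t0 k; nra.
have : 0 <= ip (vsub (vscale (vnorm z) c) (vscale rho z)) z.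
  apply: ip_ge0_limit => eps eps0; have [N dN] := dz eps eps0.
  exists (vsub (vscale (vnorm z) c) (vscale rho z)), (d N).
  by rewrite vnorm_subvv; split => //; split; [exact: dN | exact: along].
rewrite ip_subl !ip_scalel -vnorm_sqr (ip_sym c); nra.
Qed.

Lemma WS1_of_WS2 : vi_continuous_op T -> vi_monotone T -> vi_closed_set X -> vi_convex_set X ->
  (forall x y, VI_sol T X x -> VI_sol T X y -> T x = T y) ->
  WS2 T X rho -> WS1 T X rho.
Proof.
move=> Tc Tm Xc Xv Tconst ws2 xs x solxs Xx.
have solv := VI_sol_convex Tc Tm Xv.
have [p [solp pmin]] :=
  closed_convex_min_exists x (ex_intro _ xs solxs) (VI_sol_closed Tc Xc) solv.
have tan : vi_tangent_cone X p (vsub x p).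
  exists (fun=> 1), (fun=> vsub x p); split; first by move=> _; lra.
  split; first by move=> eps eps0; exists 0%N => k _; rewrite vnorm_subvv.
  by move=> _; have -> : vadd p (vscale 1 (vsub x p)) = x by vec_ring.
have := ws2 p (vsub x p) solp tan (min_normal_cone solv solp pmin).
rewrite (Tconst p xs solp solxs) => ws2p.
have := vi_dist_le x (C := VI_sol T X) solp; have := proj2 solxs p (proj1 solp).
rewrite !ip_subr in ws2p *; nra.
Qed.

End WeakSharpness.

Theorem proposition2p1 (n : nat) (T : Vec n -> Vec n) (X : Vec n -> Prop) :
  vi_continuous_op T -> vi_monotone T ->
  (exists x : Vec n, X x) -> vi_closed_set X -> vi_convex_set X ->
  forall rho : R, 0 < rho ->
    (WS1 T X rho -> WS2 T X rho) /\
    ((forall x y : Vec n, VI_sol T X x -> VI_sol T X y -> T x = T y) ->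
       WS2 T X rho -> WS1 T X rho).
Proof.
move=> Tc Tm _ Xc Xv rho /Rlt_le rho0; split.
  exact: WS2_of_WS1.
exact: WS1_of_WS2.
Qed.
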